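(* Let $n\geq2$, $m<0$, and let $\langle \sigma_{a_1}\cdots\sigma_{a_n}\rangle^{(m),+}$ and $\langle \sigma_{a_1}\cdots\sigma_{a_n}\rangle^{(-m),\mathtt{f}}$ be the full-plane scaling functions, and $\mathcal{C}=2^{1/6}e^{3\zeta'(-1)/2}$. Then $\mathcal{C}^n\langle \sigma_{a_1}\cdots\sigma_{a_n}\rangle^{(m),+}$ and $\mathcal{C}^n\langle \sigma_{a_1}\cdots\sigma_{a_n}\rangle^{(-m),\mathtt{f}}$ are rotationally invariant: for every $\phi\in\mathbb{R}$ and distinct $a_1,\ldots,a_n\in\mathbb{C}$, their values at $(e^{i\phi}a_1,\ldots,e^{i\phi}a_n)$ equal their values at $(a_1,\ldots,a_n)$.
   Context: Setting: $\Lambda=\Lambda_\delta$ is a $\delta$-isoradial lattice (every face inscribed in a circle of radius $\delta$; its dual $\Lambda^*$ is also $\delta$-isoradial), whose rhombus half-angles $\bar\theta_e\in(0,\pi/2)$ at primal vertices are uniformly bounded away from $0,\pi/2$. The Z-invariant Ising model with nome $q$ (elliptic modulus $k$, quarter period $K(k)$) assigns $\pm1$ spins to faces with weight $\prod_{e\in L(\sigma)}\tan(\hat\theta_e/2)$, $\sin\hat\theta_e=\operatorname{sn}(\tfrac{2K(k)}{\pi}\bar\theta_e|k)$, $L(\sigma)$ the set of edges separating unequal spins; $+$ denotes plus and $\mathtt{f}$ free boundary conditions, infinite-lattice expectations being infinite-volume limits. With nome $q=m\delta/2$ on $\Lambda$ (plus b.c.) and nome $-m\delta/2$ on $\Lambda^*$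 (free b.c.), the full-plane scaling functions are the functions for which, as $\delta\downarrow0$, $\delta^{-n/8}\mathbb{E}^{(m),+}_{\Lambda}[\sigma_{a_1}\cdots\sigma_{a_n}]\to \mathcal{C}^n\langle \sigma_{a_1}\cdots\sigma_{a_n}\rangle^{(m),+}$ and $\delta^{-n/8}\mathbb{E}^{(-m),\mathtt{f}}_{\Lambda^*}[\sigma_{a_1}\cdots\sigma_{a_n}]\to \mathcal{C}^n\langle \sigma_{a_1}\cdots\sigma_{a_n}\rangle^{(-m),\mathtt{f}}$, where $\sigma_a$ is the spin at a face near $a$. *)

From HB Require Import structures.
From mathcomp Require Import all_boot all_order all_algebra finmap.
From mathcomp Require Import all_classical all_reals all_analysis.
Set Implicit Arguments. Unset Strict Implicit. Unset Printing Implicit Defensive.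
Import Order.TTheory GRing.Theory Num.Theory numFieldNormedType.Exports.
Local Open Scope classical_set_scope.
Local Open Scope ring_scope.

Section Defs.
Variable R : realType.

(* points of the plane C = R^2 *)
Definition pt := (R * R)%type.
Definition padd (a b : pt) : pt := (a.1 + b.1, a.2 + b.2).
Definition psub (a b : pt) : pt := (a.1 - b.1, a.2 - b.2).
Definition pscale (s : R) (a : pt) : pt := (s * a.1, s * a.2).
Definition pdot (a b : pt) : R := a.1 * b.1 + a.2 * b.2.
Definition pnorm (a : pt) : R := Num.sqrt (pdot a a).
Definition pdist (a b : pt) : R := pnorm (psub a b).
(* multiplication by e^{i phi} *)
Definition prot (phi : R) (a : pt) : pt :=
  (cos phi * a.1 - sin phi * a.2, sin phi * a.1 + cos phi * a.2).
(* lexicographic strict order, used only to pick canonical representatives *)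
Definition plex (a b : pt) : bool := (a.1 < b.1) || ((a.1 == b.1) && (a.2 < b.2)).

(* A rhombus is encoded by a triple ((u, w), w') : u a primal vertex, w, w' the
   two dual vertices; the other primal vertex is u' = w + w' - u.  The edge of
   Lambda is (u,u'), the dual edge of Lambda^* is (w,w'). *)
Definition rhomb := (pt * pt * pt)%type.
Definition rh_u (r : rhomb) : pt := r.1.1.
Definition rh_w (r : rhomb) : pt := r.1.2.
Definition rh_w' (r : rhomb) : pt := r.2.
Definition rh_u' (r : rhomb) : pt := psub (padd (rh_w r) (rh_w' r)) (rh_u r).

Definition rh_hull (r : rhomb) : set pt :=
  [set z | exists s t, 0 <= s <= 1 /\ 0 <= t <= 1 /\
     z = padd (rh_u r) (padd (pscale s (psub (rh_w r) (rh_u r)))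
                             (pscale t (psub (rh_w' r) (rh_u r))))].
Definition rh_int (r : rhomb) : set pt :=
  [set z | exists s t, 0 < s < 1 /\ 0 < t < 1 /\
     z = padd (rh_u r) (padd (pscale s (psub (rh_w r) (rh_u r)))
                             (pscale t (psub (rh_w' r) (rh_u r))))].
Definition rh_verts (r : rhomb) : set pt :=
  [set rh_u r; rh_w r; rh_u' r; rh_w' r].

Definition half_angle (r : rhomb) : R :=
  acos (pdot (psub (rh_w r) (rh_u r)) (psub (rh_w' r) (rh_u r)) /
        (pnorm (psub (rh_w r) (rh_u r)) * pnorm (psub (rh_w' r) (rh_u r)))) / 2.

Definition primal_v (L : set rhomb) : set pt := [set u | exists r, L r /\ rh_u r = u].
Definition dual_v (L : set rhomb) : set pt := [set w | exists r, L r /\ rh_w r = w].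

(* L is (the rhombic tiling of) a delta-isoradial lattice Lambda: an
   edge-to-edge tiling of the plane by rhombi of side delta, whose vertices are
   bicoloured into primal vertices (Lambda) and dual vertices (Lambda^*, the
   circumcentres of the faces of Lambda).  Every rhombus is listed under all
   four of its representations. *)
Definition isoradial (delta : R) (L : set rhomb) : Prop :=
  [/\ (forall r, L r -> pdist (rh_w r) (rh_u r) = delta /\
                       pdist (rh_w' r) (rh_u r) = delta /\ rh_w r <> rh_w' r /\
                       rh_u r <> rh_u' r),
      (forall r, L r -> L ((rh_u r, rh_w' r), rh_w r) /\ L ((rh_u' r, rh_w r), rh_w' r)),
      primal_v L `&` dual_v L = set0 /\
      (forall z, exists r, L r /\ rh_hull r z),
      (forall r1 r2 z, L r1 -> L r2 -> rh_int r1 z -> rh_int r2 z -> rh_hull r1 = rh_hull r2) &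
      (forall r1 r2 v, L r1 -> L r2 -> rh_verts r1 v -> rh_hull r2 v -> rh_verts r2 v)].

Definition angles_bounded (eta : R) (L : set rhomb) : Prop :=
  forall r, L r -> eta <= half_angle r <= pi / 2 - eta.

(* one canonical representative per rhombus (= per edge of Lambda) *)
Definition canon (L : set rhomb) : set rhomb :=
  [set r | L r /\ plex (rh_u r) (rh_u' r) /\ plex (rh_w r) (rh_w' r)].

Definition seriesR (u : nat -> R) : R := limn (fun N => \sum_(j < N) u j).
(* theta_3(q) and theta_2(q)/q^{1/4} = 2 sum_{j>=0} q^{j(j+1)} *)
Definition theta3 (q : R) : R := 1 + 2 * seriesR (fun j => q ^+ (j.+1 * j.+1)).
Definition theta2r (q : R) : R := 2 * seriesR (fun j => q ^+ (j * j.+1)).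
(* modulus: k^2 = theta_2(q)^4 / theta_3(q)^4 *)
Definition ksq (q : R) : R := q * theta2r q ^+ 4 / theta3 q ^+ 4.
Definition ellF (q phi : R) : R :=
  \int[lebesgue_measure]_(t in `[0, phi]) (Num.sqrt (1 - ksq q * sin t ^+ 2))^-1.
Definition ellK (q : R) : R := ellF q (pi / 2).
(* Jacobi amplitude and sn(u | k) for u >= 0 *)
Definition jam (q u : R) : R := xget 0 [set phi | 0 <= phi /\ ellF q phi = u].
Definition jsn (q u : R) : R := sin (jam q u).
(* Z-invariant weight tan(theta_hat/2), sin theta_hat = sn(2K thetabar/pi | k) *)
Definition zweight (q thetabar : R) : R :=
  tan (asin (jsn q (2 * ellK q * thetabar / pi)) / 2).

Definition spin (S : {fset pt}) (x : pt) : R := if x \in S then -1 else 1.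

(* Lambda, plus boundary conditions: spins on faces of Lambda (dual vertices)
   in the ball of radius N, + outside; S = set of minus spins *)
Definition ballD (L : set rhomb) (N : R) : {fset pt} :=
  fset_set [set w | dual_v L w /\ pnorm w <= N].
Definition ballP (L : set rhomb) (N : R) : {fset pt} :=
  fset_set [set u | primal_v L u /\ pnorm u <= N].

Definition Wplus (q : R) (L : set rhomb) (S : {fset pt}) : R :=
  \big[*%R/1]_(r \in [set r | canon L r /\ ((rh_w r \in S) != (rh_w' r \in S))])
     zweight q (half_angle r).
Definition Eplus_fin (q : R) (L : set rhomb) (N : R) (xs : seq pt) : R :=
  (\sum_(S <- fpowerset (ballD L N)) Wplus q L S * \prod_(x <- xs) spin S x) /
  (\sum_(S <- fpowerset (ballD L N)) Wplus q L S).
Definition Eplus (q : R) (L : set rhomb) (xs : seq pt) : R :=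
  limn (fun N : nat => Eplus_fin q L N%:R xs).

(* Lambda^*, free boundary conditions: spins on faces of Lambda^* (primal
   vertices) in the ball of radius N; only edges of Lambda^* inside count.
   The half-angle of the rhombus at the dual vertex is pi/2 - thetabar. *)
Definition Wfree (q : R) (L : set rhomb) (D S : {fset pt}) : R :=
  \big[*%R/1]_(r \in [set r | canon L r /\ rh_u r \in D /\ rh_u' r \in D /\
                        ((rh_u r \in S) != (rh_u' r \in S))])
     zweight q (pi / 2 - half_angle r).
Definition Efree_fin (q : R) (L : set rhomb) (N : R) (xs : seq pt) : R :=
  (\sum_(S <- fpowerset (ballP L N)) Wfree q L (ballP L N) S * \prod_(x <- xs) spin S x) /
  (\sum_(S <- fpowerset (ballP L N)) Wfree q L (ballP L N) S).
Definition Efree (q : R) (L : set rhomb) (xs : seq pt) : R :=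
  limn (fun N : nat => Efree_fin q L N%:R xs).

(* Riemann zeta via Hasse's globally convergent series (valid for s <> 1) *)
Definition zetaR (s : R) : R :=
  (1 - 2 `^ (1 - s))^-1 *
  seriesR (fun j => 2 `^ (- (j.+1)%:R) *
     \sum_(k < j.+1) ((-1) ^+ k * 'C(j, k)%:R * (k.+1)%:R `^ (- s))).
Definition Cconst : R := 2 `^ (6^-1) * expR (3 / 2 * derive1 zetaR (-1)).

Definition is_scaling_plus (m : R) (n : nat) (f : ('I_n -> pt) -> R) : Prop :=
  forall (eta : R), 0 < eta < pi / 4 ->
  forall (Lam : R -> set rhomb),
    (forall delta, 0 < delta -> isoradial delta (Lam delta) /\ angles_bounded eta (Lam delta)) ->
  forall (a : 'I_n -> pt), injective a ->
  forall (w : R -> 'I_n -> pt),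
    (forall delta i, 0 < delta -> dual_v (Lam delta) (w delta i) /\ pdist (w delta i) (a i) <= delta) ->
  (fun delta => delta `^ (- (n%:R / 8)) *
      Eplus (m * delta / 2) (Lam delta) [seq w delta i | i <- enum 'I_n])
    @ 0^'+ --> Cconst ^+ n * f a.

Definition is_scaling_free (m : R) (n : nat) (f : ('I_n -> pt) -> R) : Prop :=
  forall (eta : R), 0 < eta < pi / 4 ->
  forall (Lam : R -> set rhomb),
    (forall delta, 0 < delta -> isoradial delta (Lam delta) /\ angles_bounded eta (Lam delta)) ->
  forall (a : 'I_n -> pt), injective a ->
  forall (v : R -> 'I_n -> pt),
    (forall delta i, 0 < delta -> primal_v (Lam delta) (v delta i) /\ pdist (v delta i) (a i) <= delta) ->
  (fun delta => delta `^ (- (n%:R / 8)) *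
      Efree (m * delta / 2) (Lam delta) [seq v delta i | i <- enum 'I_n])
    @ 0^'+ --> Cconst ^+ n * f a.

End Defs.

From Pilot Require Import Defs.
From mathcomp Require Import all_boot all_order all_algebra finmap.
From mathcomp Require Import all_classical all_reals all_analysis.
From mathcomp Require Import ring lra zify.
Import Order.TTheory GRing.Theory Num.Theory numFieldNormedType.Exports.
Local Open Scope classical_set_scope.
Local Open Scope ring_scope.
Set Implicit Arguments. Unset Strict Implicit. Unset Printing Implicit Defensive.

(* Rotation invariance is inherited from the lattice.  Rotating a delta-isoradial
   lattice by phi gives again a delta-isoradial lattice with the same rhombus
   half-angles, and the rotation carries faces, edges, boundary balls and spin
   configurations of one onto the other, so the Ising correlations of the rotated
   spins on the rotated lattice are the original ones.  A scaling function is the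
   common limit along every admissible family of lattices; comparing the square
   lattice at a with its rotation at e^{i phi} a, uniqueness of limits gives the
   invariance.  Neither n >= 2 nor the sign of m plays a role. *)

Section ImageFset.
Variables (T U : choiceType) (f : T -> U) (g : U -> T).
Hypothesis fK : cancel f g.

Lemma mem_imfset_can (S : {fset T}) x : (f x \in f @` S)%fset = (x \in S).
Proof. by rewrite mem_imfset //; exact: can_inj fK. Qed.

Lemma fset_set_image_can (A : set T) : fset_set (f @` A) = (f @` fset_set A)%fset.
Proof.
have [finA|infA] := pselect (finite_set A); first exact: fset_set_image.
have gfK : g \o f = id by apply/funext => x; exact: fK.
have inffA : ~ finite_set (f @` A).
  by move=> /(finite_image g); rewrite image_comp gfK image_id.
by rewrite /fset_set; do 2 case: pselect => //; rewrite imfset0.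
Qed.

Lemma fpowerset_imfset (B : {fset T}) :
  fpowerset (f @` B)%fset = ((fun S : {fset T} => f @` S) @` fpowerset B)%fset.
Proof.
apply/fsetP => S'; rewrite fpowersetE; apply/idP/imfsetP => [subS'|[S + ->]].
  exists (g @` S')%fset; last first.
    apply/fsetP => y; apply/idP/imfsetP => [yS'|[x /imfsetP[y' y'S' ->] ->]].
      have /imfsetP[x _ eq_y] := fsubsetP subS' y yS'.
      by exists x => //; apply/imfsetP; exists y; rewrite // eq_y fK.
    by have /imfsetP[x' _ eq_y'] := fsubsetP subS' y' y'S'; rewrite eq_y' fK -eq_y'.
  rewrite /= fpowersetE; apply/fsubsetP => _ /imfsetP[y yS' ->].
  by have /imfsetP[x xB ->] := fsubsetP subS' y yS'; rewrite fK.
rewrite fpowersetE => subS; apply/fsubsetP => _ /imfsetP[x xS ->].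
by rewrite in_imfset // (fsubsetP subS).
Qed.

Lemma sum_fpowerset_imfset (V : nmodType) (B : {fset T}) (G : {fset U} -> V) :
  \sum_(S <- fpowerset (f @` B)%fset) G S = \sum_(S <- fpowerset B) G (f @` S)%fset.
Proof.
have imfset_inj : injective (fun S : {fset T} => (f @` S)%fset).
  by move=> S1 S2 eqS; apply/fsetP => x; rewrite -!mem_imfset_can eqS.
rewrite fpowerset_imfset big_imfset /=; last by move=> S1 S2 _ _ /imfset_inj.
by apply: perm_big; apply: uniq_perm => //; apply: fset_uniq.
Qed.

Lemma image_can_preimage (A : set T) : cancel g f -> f @` A = g @^-1` A.
Proof.
move=> gK; apply/funext => y; apply/propext; split=> [[x Ax <-]|Agy].
  by rewrite /preimage /= fK.
by exists (g y); rewrite ?gK.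
Qed.

End ImageFset.

Section Rotation.
Variable R : realType.
Implicit Types (phi psi s : R) (a b : pt R).

Lemma prot0 a : prot 0 a = a.
Proof. by case: a => x y; rewrite /prot cos0 sin0 /=; congr pair; ring. Qed.

Lemma prot_comp phi psi a : prot phi (prot psi a) = prot (phi + psi) a.
Proof. by rewrite /prot cosD sinD /=; congr pair; ring. Qed.

Lemma protK phi : cancel (prot phi) (prot (- phi)).
Proof. by move=> a; rewrite prot_comp addNr prot0. Qed.

Lemma protNK phi : cancel (prot (- phi)) (prot phi).
Proof. by move=> a; rewrite prot_comp addrN prot0. Qed.

Lemma prot_inj phi : injective (prot phi).
Proof. exact: can_inj (protK phi). Qed.

Lemma prot_padd phi a b : prot phi (padd a b) = padd (prot phi a) (prot phi b).
Proof. by rewrite /prot /padd /=; congr pair; ring. Qed.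

Lemma prot_psub phi a b : prot phi (psub a b) = psub (prot phi a) (prot phi b).
Proof. by rewrite /prot /psub /=; congr pair; ring. Qed.

Lemma prot_pscale phi s a : prot phi (pscale s a) = pscale s (prot phi a).
Proof. by rewrite /prot /pscale /=; congr pair; ring. Qed.

Lemma pdotC a b : pdot a b = pdot b a.
Proof. by rewrite /pdot; ring. Qed.

Lemma pdot_prot phi a b : pdot (prot phi a) (prot phi b) = pdot a b.
Proof. by rewrite /pdot /prot /= -[RHS]mul1r -(cos2Dsin2 phi); ring. Qed.

Lemma pnorm_prot phi a : pnorm (prot phi a) = pnorm a.
Proof. by rewrite /pnorm pdot_prot. Qed.

Lemma pdist_prot phi a b : pdist (prot phi a) (prot phi b) = pdist a b.
Proof. by rewrite /pdist -prot_psub pnorm_prot. Qed.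

End Rotation.

Section RotatedLattice.
Variable R : realType.
Implicit Types (phi : R) (z : pt R) (r : rhomb R) (L : set (rhomb R)).

Definition rh_rot phi r : rhomb R :=
  ((prot phi (rh_u r), prot phi (rh_w r)), prot phi (rh_w' r)).

Definition lat_rot phi L : set (rhomb R) := rh_rot (- phi) @^-1` L.

Lemma rh_rotK phi : cancel (rh_rot phi) (rh_rot (- phi)).
Proof. by case=> [[u w] w']; rewrite /rh_rot /= !protK. Qed.

Lemma rh_rotNK phi : cancel (rh_rot (- phi)) (rh_rot phi).
Proof. by case=> [[u w] w']; rewrite /rh_rot /= !protNK. Qed.

Lemma lat_rotP phi L r : lat_rot phi L (rh_rot phi r) = L r.
Proof. by rewrite /lat_rot /preimage /= rh_rotK. Qed.

Lemma rh_u_rot phi r : rh_u (rh_rot phi r) = prot phi (rh_u r). Proof. by []. Qed.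
Lemma rh_w_rot phi r : rh_w (rh_rot phi r) = prot phi (rh_w r). Proof. by []. Qed.
Lemma rh_w'_rot phi r : rh_w' (rh_rot phi r) = prot phi (rh_w' r). Proof. by []. Qed.
Lemma rh_u'_rot phi r : rh_u' (rh_rot phi r) = prot phi (rh_u' r).
Proof. by rewrite /rh_u' prot_psub prot_padd. Qed.

Definition rh_rotE := (rh_u_rot, rh_w_rot, rh_w'_rot, rh_u'_rot).

Lemma half_angle_rot phi r : half_angle (rh_rot phi r) = half_angle r.
Proof. by rewrite /half_angle /= -!prot_psub !pdot_prot !pnorm_prot. Qed.

Lemma rh_hull_rot phi r : rh_hull (rh_rot phi r) = prot (- phi) @^-1` rh_hull r.
Proof.
apply/funext => z; apply/propext; rewrite /rh_hull /rh_u /rh_w /rh_w' /=; split.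
  move=> [s [t [hs [ht ->]]]]; exists s, t; split=> //; split=> //.
  by rewrite -!prot_psub -!prot_pscale -!prot_padd protK.
move=> [s [t [hs [ht e]]]]; exists s, t; split=> //; split=> //.
by rewrite -!prot_psub -!prot_pscale -!prot_padd -e protNK.
Qed.

Lemma rh_int_rot phi r : rh_int (rh_rot phi r) = prot (- phi) @^-1` rh_int r.
Proof.
apply/funext => z; apply/propext; rewrite /rh_int /rh_u /rh_w /rh_w' /=; split.
  move=> [s [t [hs [ht ->]]]]; exists s, t; split=> //; split=> //.
  by rewrite -!prot_psub -!prot_pscale -!prot_padd protK.
move=> [s [t [hs [ht e]]]]; exists s, t; split=> //; split=> //.
by rewrite -!prot_psub -!prot_pscale -!prot_padd -e protNK.
Qed.

Lemma rh_verts_rot phi r : rh_verts (rh_rot phi r) = prot (- phi) @^-1` rh_verts r.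
Proof.
have eq_prot a z : (z = prot phi a) = (prot (- phi) z = a).
  by apply/propext; split=> [->|<-]; rewrite ?protK ?protNK.
by apply/funext => z; rewrite /rh_verts !rh_rotE /preimage /= !eq_prot.
Qed.

Lemma primal_v_rot phi L : primal_v (lat_rot phi L) = prot (- phi) @^-1` primal_v L.
Proof.
apply/funext => z; apply/propext; split; first by move=> [r [Lr <-]]; exists (rh_rot (- phi) r).
move=> [r [Lr e]]; exists (rh_rot phi r); rewrite lat_rotP; split=> //.
by rewrite rh_rotE e protNK.
Qed.

Lemma dual_v_rot phi L : dual_v (lat_rot phi L) = prot (- phi) @^-1` dual_v L.
Proof.
apply/funext => z; apply/propext; split; first by move=> [r [Lr <-]]; exists (rh_rot (- phi) r).
move=> [r [Lr e]]; exists (rh_rot phi r); rewrite lat_rotP; split=> //.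
by rewrite rh_rotE e protNK.
Qed.

Lemma lat_rot_ind phi L (P : rhomb R -> Prop) :
  (forall r, L r -> P (rh_rot phi r)) -> forall r, lat_rot phi L r -> P r.
Proof. by move=> PL r Lr; rewrite -(rh_rotNK phi r); apply: PL. Qed.

Lemma isoradial_rot phi delta L : isoradial delta L -> isoradial delta (lat_rot phi L).
Proof.
case=> [sides closed [disj cover] overlap conform]; split.
- apply: lat_rot_ind => r /sides; rewrite !rh_rotE !pdist_prot.
  by move=> [-> [-> [nw nu]]]; do 3 split=> //; move/prot_inj.
- apply: lat_rot_ind => r /closed[Ls Lf]; split.
    by rewrite -(lat_rotP phi) in Ls.
  by rewrite -(lat_rotP phi) /rh_rot -rh_u'_rot in Lf.
- split; last first.
    move=> z; have [r [Lr hr]] := cover (prot (- phi) z).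
    by exists (rh_rot phi r); rewrite lat_rotP rh_hull_rot.
  rewrite primal_v_rot dual_v_rot -preimage_setI disj.
  by rewrite preimage_set0.
- move=> r1 r2 z; rewrite -[r1](rh_rotNK phi) -[r2](rh_rotNK phi) !lat_rotP.
  move: (rh_rot _ r1) (rh_rot _ r2) => {}r1 {}r2 L1 L2.
  rewrite !rh_int_rot !rh_hull_rot => i1 i2.
  by rewrite (overlap _ _ _ L1 L2 i1 i2).
- move=> r1 r2 v; rewrite -[r1](rh_rotNK phi) -[r2](rh_rotNK phi) !lat_rotP.
  move: (rh_rot _ r1) (rh_rot _ r2) => {}r1 {}r2 L1 L2.
  rewrite !rh_verts_rot rh_hull_rot; exact: conform.
Qed.

Lemma angles_bounded_rot phi eta L :
  angles_bounded eta L -> angles_bounded eta (lat_rot phi L).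
Proof. by move=> bnd; apply: lat_rot_ind => r /bnd; rewrite half_angle_rot. Qed.

End RotatedLattice.

Section CanonicalRepresentative.
Variable R : realType.
Implicit Types (phi : R) (a b : pt R) (r : rhomb R) (L : set (rhomb R)).

Lemma plex_total a b : a <> b -> plex a b || plex b a.
Proof.
case: a b => [x1 y1] [x2 y2]; rewrite /plex /= => neq.
have [//|//|eq_x] := ltgtP x1 x2 => /=.
by have [//|//|eq_y] := ltgtP y1 y2; rewrite eq_x eq_y in neq.
Qed.

Lemma plex_asym a b : plex a b -> ~~ plex b a.
Proof.
case: a b => [x1 y1] [x2 y2]; rewrite /plex /=.
case/orP => [lt_x|/andP[/eqP <- lt_y]].
  by rewrite negb_or (lt_gtF lt_x) /= negb_and (gt_eqF lt_x).
by rewrite ltxx eqxx /= (lt_gtF lt_y).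
Qed.

Lemma plexNE a b : a <> b -> ~~ plex a b -> plex b a.
Proof. by move=> /plex_total; case: (plex a b). Qed.

Definition rh_swap r : rhomb R := ((rh_u r, rh_w' r), rh_w r).
Definition rh_flip r : rhomb R := ((rh_u' r, rh_w r), rh_w' r).

Definition rh_repr r : rhomb R :=
  let r1 := if plex (rh_u r) (rh_u' r) then r else rh_flip r in
  if plex (rh_w r1) (rh_w' r1) then r1 else rh_swap r1.

Definition rh_nondeg r := rh_w r <> rh_w' r /\ rh_u r <> rh_u' r.

Definition rh_invariant T (F : rhomb R -> T) :=
  forall r, rh_nondeg r -> F (rh_swap r) = F r /\ F (rh_flip r) = F r.

Definition sym_closed L := forall r, L r -> [/\ rh_nondeg r, L (rh_swap r) & L (rh_flip r)].

Lemma rh_u'_swap r : rh_u' (rh_swap r) = rh_u' r.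
Proof. by rewrite /rh_u' /padd /psub /=; congr pair; ring. Qed.

Lemma rh_u'_flip r : rh_u' (rh_flip r) = rh_u r.
Proof. by rewrite /rh_u' /padd /psub /=; case: r => [[[? ?] ?] ?] /=; congr pair; ring. Qed.

Lemma rh_swapK : involutive rh_swap. Proof. by case=> [[]]. Qed.

Lemma rh_flipK : involutive rh_flip.
Proof. by move=> r; rewrite {1}/rh_flip rh_u'_flip; case: r => [[]]. Qed.

Lemma rh_flip_swap r : rh_flip (rh_swap r) = rh_swap (rh_flip r).
Proof. by rewrite /rh_flip rh_u'_swap. Qed.

Lemma rh_rot_swap phi r : rh_rot phi (rh_swap r) = rh_swap (rh_rot phi r).
Proof. by []. Qed.

Lemma rh_rot_flip phi r : rh_rot phi (rh_flip r) = rh_flip (rh_rot phi r).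
Proof. by rewrite /rh_flip /rh_rot rh_u'_rot. Qed.

Lemma rh_nondeg_swap r : rh_nondeg r -> rh_nondeg (rh_swap r).
Proof. by case=> nw nu; split; [apply: nesym | rewrite rh_u'_swap]. Qed.

Lemma rh_nondeg_flip r : rh_nondeg r -> rh_nondeg (rh_flip r).
Proof. by case=> nw nu; split; [| rewrite rh_u'_flip; apply: nesym]. Qed.

Lemma rh_nondeg_rot phi r : rh_nondeg r -> rh_nondeg (rh_rot phi r).
Proof. by case=> nw nu; split; rewrite !rh_rotE => /prot_inj. Qed.

Lemma rh_repr_cases r :
  [\/ rh_repr r = r, rh_repr r = rh_swap r, rh_repr r = rh_flip r
    | rh_repr r = rh_swap (rh_flip r)].
Proof. by rewrite /rh_repr; do 2 case: ifP => _; constructor. Qed.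

Lemma rh_repr_invariant T (F : rhomb R -> T) r :
  rh_invariant F -> rh_nondeg r -> F (rh_repr r) = F r.
Proof.
move=> invF ndr; have [[Fs Ff] nd_fl] := (invF r ndr, rh_nondeg_flip ndr).
by case: (rh_repr_cases r) => ->; rewrite ?(invF _ nd_fl).1.
Qed.

Lemma rh_repr_canon r : rh_nondeg r ->
  plex (rh_u (rh_repr r)) (rh_u' (rh_repr r)) /\ plex (rh_w (rh_repr r)) (rh_w' (rh_repr r)).
Proof.
case=> nw nu; rewrite /rh_repr.
have flip_u : ~~ plex (rh_u r) (rh_u' r) -> plex (rh_u (rh_flip r)) (rh_u' (rh_flip r)).
  by rewrite rh_u'_flip; apply: plexNE; exact: nu.
have [pu|/flip_u pu] /= := boolP (plex (rh_u r) (rh_u' r)).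
all: case: ifP => [//|/negbT npw]; rewrite rh_u'_swap; split=> //.
all: exact: (plexNE nw npw).
Qed.

Lemma rh_repr_id r : plex (rh_u r) (rh_u' r) -> plex (rh_w r) (rh_w' r) -> rh_repr r = r.
Proof. by move=> pu pw; rewrite /rh_repr pu pw. Qed.

Lemma rh_repr_swap r : rh_w r <> rh_w' r -> rh_repr (rh_swap r) = rh_repr r.
Proof.
move=> nw; rewrite /rh_repr rh_u'_swap rh_flip_swap -(fun_if rh_swap) [rh_u (rh_swap r)]/=.
have : rh_w (if plex (rh_u r) (rh_u' r) then r else rh_flip r) <>
       rh_w' (if plex (rh_u r) (rh_u' r) then r else rh_flip r) by case: ifP.
move: (if _ then r else _) => r1 nw1.
rewrite [rh_w (rh_swap _)]/= [rh_w' (rh_swap _)]/= rh_swapK.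
by have /orP[pw|pw] := plex_total nw1; rewrite pw (negbTE (plex_asym pw)).
Qed.

Lemma rh_repr_flip r : rh_u r <> rh_u' r -> rh_repr (rh_flip r) = rh_repr r.
Proof.
move=> nu; rewrite /rh_repr rh_u'_flip rh_flipK [rh_u (rh_flip _)]/=.
by have /orP[pu|pu] := plex_total nu; rewrite pu (negbTE (plex_asym pu)).
Qed.

Lemma rh_repr_is_invariant : rh_invariant rh_repr.
Proof. by move=> r [nw nu]; rewrite rh_repr_swap ?rh_repr_flip. Qed.

End CanonicalRepresentative.

Section IsingRotation.
Variable R : realType.
Implicit Types (phi q : R) (r : rhomb R) (L : set (rhomb R)) (S : {fset pt R}).

Lemma rh_invariant_rot T (F : rhomb R -> T) phi :
  rh_invariant F -> rh_invariant (F \o rh_rot phi).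
Proof.
by move=> invF r /(rh_nondeg_rot phi) /invF; rewrite /= rh_rot_swap rh_rot_flip.
Qed.

Lemma rh_repr_rot_repr phi r :
  rh_nondeg r -> rh_repr (rh_rot phi (rh_repr r)) = rh_repr (rh_rot phi r).
Proof.
move=> ndr; have invF := rh_invariant_rot phi (@rh_repr_is_invariant R).
exact: (rh_repr_invariant invF ndr).
Qed.

Lemma canon_repr_id L r : Defs.canon L r -> rh_repr r = r.
Proof. by case=> _ [pu pw]; exact: rh_repr_id. Qed.

Lemma canon_repr L r : sym_closed L -> L r -> Defs.canon L (rh_repr r).
Proof.
move=> closedL Lr; have [ndr Ls Lf] := closedL r Lr.
split; last exact: rh_repr_canon.
by case: (rh_repr_cases r) => -> //; have [] := closedL _ Lf.
Qed.

Lemma isoradial_sym_closed delta L : isoradial delta L -> sym_closed L.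
Proof.
by case=> sides closed _ _ _ r Lr; have [_ [_ nd]] := sides r Lr; have [] := closed r Lr.
Qed.

Lemma sym_closed_rot phi L : sym_closed L -> sym_closed (lat_rot phi L).
Proof.
move=> closedL; apply: lat_rot_ind => r /closedL[ndr Ls Lf].
by split; [exact: rh_nondeg_rot | rewrite -rh_rot_swap lat_rotP | rewrite -rh_rot_flip lat_rotP].
Qed.

(* [canon] lists one representative per rhombus by a lexicographic rule that rotation
   does not preserve; [rh_repr \o rh_rot phi] matches the two lists bijectively. *)
Lemma prod_canon_rot phi L (C : rhomb R -> Prop) (F : rhomb R -> R) :
  sym_closed L -> rh_invariant C -> rh_invariant F ->
  \big[*%R/1]_(r \in [set r | Defs.canon (lat_rot phi L) r /\ C r]) F r =
  \big[*%R/1]_(r \in [set r | Defs.canon L r /\ C (rh_rot phi r)]) F (rh_rot phi r).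
Proof.
move=> closedL invC invF; have closedL' : sym_closed (lat_rot phi L) by exact: sym_closed_rot.
have ndL r : L r -> rh_nondeg r by case/closedL.
have rot_back r : Defs.canon L r -> rh_repr (rh_rot (- phi) (rh_repr (rh_rot phi r))) = r.
  case=> Lr cr; rewrite rh_repr_rot_repr; last exact/rh_nondeg_rot/ndL.
  by rewrite rh_rotK rh_repr_id //; case: cr.
rewrite (reindex_fsbig (@rh_repr R \o rh_rot phi) [set r | Defs.canon L r /\ C (rh_rot phi r)]).
  apply: eq_fsbigr => r /[!inE] -[[Lr _] _] /=.
  by rewrite rh_repr_invariant //; exact/rh_nondeg_rot/ndL.
split.
- move=> r [[Lr _] Cr] /=; have ndr := rh_nondeg_rot phi (ndL r Lr).
  by split; [apply: canon_repr; rewrite ?lat_rotP | rewrite rh_repr_invariant].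
- move=> r1 r2 /[!inE] -[c1 _] [c2 _] /= eq_r.
  by rewrite -(rot_back _ c1) eq_r rot_back.
- move=> r [cr Cr]; have Lr : L (rh_rot (- phi) r) by case: cr.
  have ndr := ndL _ Lr.
  exists (rh_repr (rh_rot (- phi) r)); first split.
  + exact: canon_repr.
  + by have := rh_repr_invariant (rh_invariant_rot phi invC) ndr; rewrite /= rh_rotNK => ->.
  + by rewrite /= rh_repr_rot_repr // rh_rotNK (canon_repr_id cr).
Qed.

Lemma half_angle_invariant : rh_invariant (@half_angle R).
Proof.
move=> r _; rewrite /half_angle; split.
  by rewrite pdotC [pnorm _ * _]mulrC.
rewrite [rh_u (rh_flip r)]/= [rh_w (rh_flip r)]/= [rh_w' (rh_flip r)]/= /rh_u' /pnorm.
set u := rh_u r; set w := rh_w r; set w' := rh_w' r.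
have reflect_u (a b : pt R) : psub a (psub (padd a b) u) = psub u b.
  by rewrite /psub /padd /=; congr pair; ring.
have reflect_u' (a b : pt R) : psub b (psub (padd a b) u) = psub u a.
  by rewrite /psub /padd /=; congr pair; ring.
have pdotNN (a b : pt R) : pdot (psub u a) (psub u b) = pdot (psub a u) (psub b u).
  by rewrite /pdot /psub /=; ring.
by rewrite reflect_u reflect_u' !pdotNN pdotC [Num.sqrt _ * _]mulrC.
Qed.

Lemma Wplus_rot q phi L S : sym_closed L ->
  Wplus q (lat_rot phi L) (prot phi @` S)%fset = Wplus q L S.
Proof.
move=> closedL; rewrite /Wplus prod_canon_rot //; last first.
- by move=> r ndr; have [-> ->] := half_angle_invariant ndr.
- by move=> r _; rewrite /= eq_sym.
under eq_fsbigr do rewrite half_angle_rot.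
by apply: eq_fsbigl; apply/funext => r; rewrite /= !rh_rotE !(mem_imfset_can (protK phi)).
Qed.

Lemma Wfree_rot q phi L D S : sym_closed L ->
  Wfree q (lat_rot phi L) (prot phi @` D)%fset (prot phi @` S)%fset = Wfree q L D S.
Proof.
move=> closedL; rewrite /Wfree prod_canon_rot //; last first.
- by move=> r ndr; have [-> ->] := half_angle_invariant ndr.
- move=> r _; rewrite /= rh_u'_swap rh_u'_flip; split=> //.
  rewrite [rh_u (rh_flip r)]/= [(rh_u' r \in _) == _]eq_sym; apply/propext; tauto.
under eq_fsbigr do rewrite half_angle_rot.
by apply: eq_fsbigl; apply/funext => r; rewrite /= !rh_rotE !(mem_imfset_can (protK phi)).
Qed.

End IsingRotation.

Section Expectations.
Variable R : realType.
Implicit Types (phi q N : R) (L : set (rhomb R)) (xs : seq (pt R)).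

Lemma ballD_rot phi L N : ballD (lat_rot phi L) N = (prot phi @` ballD L N)%fset.
Proof.
rewrite /ballD -(fset_set_image_can (protK phi)) (image_can_preimage (protK phi) _ (protNK phi)).
by congr fset_set; apply/funext => z; rewrite dual_v_rot /preimage /= pnorm_prot.
Qed.

Lemma ballP_rot phi L N : ballP (lat_rot phi L) N = (prot phi @` ballP L N)%fset.
Proof.
rewrite /ballP -(fset_set_image_can (protK phi)) (image_can_preimage (protK phi) _ (protNK phi)).
by congr fset_set; apply/funext => z; rewrite primal_v_rot /preimage /= pnorm_prot.
Qed.

Lemma prod_spin_rot phi (S : {fset pt R}) xs :
  \prod_(x <- map (prot phi) xs) spin (prot phi @` S)%fset x = \prod_(x <- xs) spin S x.
Proof. by rewrite big_map; apply: eq_bigr => x _; rewrite /spin (mem_imfset_can (protK phi)). Qed.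

Lemma Eplus_rot q phi L xs : sym_closed L ->
  Eplus q (lat_rot phi L) (map (prot phi) xs) = Eplus q L xs.
Proof.
move=> closedL; congr (limn _); apply/funext => N.
rewrite /Eplus_fin ballD_rot !(sum_fpowerset_imfset (protK phi)).
by congr (_ / _); apply: eq_bigr => S _; rewrite Wplus_rot // prod_spin_rot.
Qed.

Lemma Efree_rot q phi L xs : sym_closed L ->
  Efree q (lat_rot phi L) (map (prot phi) xs) = Efree q L xs.
Proof.
move=> closedL; congr (limn _); apply/funext => N.
rewrite /Efree_fin ballP_rot !(sum_fpowerset_imfset (protK phi)).
by congr (_ / _); apply: eq_bigr => S _; rewrite Wfree_rot // prod_spin_rot.
Qed.

End Expectations.

Section SquareLattice.
Variable R : realType.
Variable d : R.
Hypothesis d_gt0 : 0 < d.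

Definition b2r (e : bool) : R := (e : nat)%:R.
Definition sq_pt (a b : int) (e1 e2 : bool) : pt R := (d * (a%:~R + b2r e1), d * (b%:~R + b2r e2)).
(* The cell [a, a+1] x [b, b+1] (scaled by [d]) with primal vertex at its corner
   [(a+x, b+y)]; [c] orders the two dual corners.  Primal vertices are the corners
   with even coordinate sum. *)
Definition sq_rhomb a b x y (c : bool) : rhomb R :=
  if c then ((sq_pt a b x y, sq_pt a b x (~~ y)), sq_pt a b (~~ x) y)
  else ((sq_pt a b x y, sq_pt a b (~~ x) y), sq_pt a b x (~~ y)).
Definition evenz (k : int) := exists j : int, k = 2 * j.
Definition square_lattice : set (rhomb R) :=
  [set r | exists (a b : int) (x y c : bool),
     evenz (a + b + (x : nat)%:Z + (y : nat)%:Z) /\ r = sq_rhomb a b x y c].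

Lemma b2r1 : b2r true = 1. Proof. by []. Qed.
Lemma b2r0 : b2r false = 0. Proof. by []. Qed.

Lemma b2rz (a : int) (e : bool) : (a + (e : nat)%:Z)%:~R = a%:~R + b2r e :> R.
Proof. by rewrite intrD. Qed.

Lemma rh_u'_sq a b x y c : rh_u' (sq_rhomb a b x y c) = sq_pt a b (~~ x) (~~ y).
Proof.
by case: c; rewrite /rh_u' /sq_rhomb /rh_u /rh_w /rh_w' /sq_pt /padd /psub /=; congr pair; ring.
Qed.

Lemma segment_param (A : R) (X : bool) v :
  (exists s, 0 <= s <= 1 /\ v = d * (A + b2r X) + s * (d * (A + b2r (~~ X)) - d * (A + b2r X)))
  <-> d * A <= v <= d * (A + 1).
Proof.
have d0 : d != 0 by rewrite gt_eqF.
have dp := d_gt0.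
split.
  case: X => -[s [/andP[h0 h1] ->]]; rewrite /= ?b2r1 ?b2r0; apply/andP; split; nra.
move=> /andP[h0 h1]; case: X.
  exists ((d * (A + 1) - v) / d).
  have e : (d * (A + 1) - v) / d * d = d * (A + 1) - v by rewrite divfK.
  split; first by apply/andP; split; nra.
  have -> : forall s, s * (d * (A + b2r (~~ true)) - d * (A + b2r true)) = - (s * d).
    by move=> s; rewrite /= ?b2r1 ?b2r0; ring.
  by rewrite e /= ?b2r1 ?b2r0; ring.
exists ((v - d * A) / d).
have e : (v - d * A) / d * d = v - d * A by rewrite divfK.
split; first by apply/andP; split; nra.
have -> : forall s, s * (d * (A + b2r (~~ false)) - d * (A + b2r false)) = s * d.
  by move=> s; rewrite /= ?b2r1 ?b2r0; ring.
by rewrite e /= ?b2r1 ?b2r0; ring.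
Qed.

Lemma segment_param_open (A : R) (X : bool) v :
  (exists s, 0 < s < 1 /\ v = d * (A + b2r X) + s * (d * (A + b2r (~~ X)) - d * (A + b2r X)))
  -> d * A < v < d * (A + 1).
Proof.
by have dp := d_gt0; case: X => -[s [/andP[h0 h1] ->]]; rewrite /= ?b2r1 ?b2r0; apply/andP; split; nra.
Qed.

Definition sq_box (a b : int) (z : pt R) :=
  (d * a%:~R <= z.1 <= d * (a%:~R + 1)) /\ (d * b%:~R <= z.2 <= d * (b%:~R + 1)).

Lemma rh_hull_sq a b x y c z : rh_hull (sq_rhomb a b x y c) z <-> sq_box a b z.
Proof.
rewrite /rh_hull /sq_box; case: c; rewrite /sq_rhomb /rh_u /rh_w /rh_w' /sq_pt /padd /pscale /psub /=; split.
- move=> [s [t [hs [ht ->]]]] /=; split.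
    by apply/(@segment_param _ x _).1; exists t; split => //; ring.
  by apply/(@segment_param _ y _).1; exists s; split => //; ring.
- move=> [/(@segment_param _ x _).2 [t [ht e1]] /(@segment_param _ y _).2 [s [hs e2]]].
  exists s, t; split => //; split => //.
  by apply: injective_projections => /=; rewrite ?e1 ?e2; ring.
- move=> [s [t [hs [ht ->]]]] /=; split.
    by apply/(@segment_param _ x _).1; exists s; split => //; ring.
  by apply/(@segment_param _ y _).1; exists t; split => //; ring.
- move=> [/(@segment_param _ x _).2 [s [hs e1]] /(@segment_param _ y _).2 [t [ht e2]]].
  exists s, t; split => //; split => //.
  by apply: injective_projections => /=; rewrite ?e1 ?e2; ring.
Qed.

Lemma rh_int_sq a b x y c z : rh_int (sq_rhomb a b x y c) z ->
  (d * a%:~R < z.1 < d * (a%:~R + 1)) /\ (d * b%:~R < z.2 < d * (b%:~R + 1)).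
Proof.
rewrite /rh_int; case: c; rewrite /sq_rhomb /rh_u /rh_w /rh_w' /sq_pt /padd /pscale /psub /=.
- move=> [s [t [hs [ht ->]]]] /=; split.
    by apply: (@segment_param_open _ x _); exists t; split => //; ring.
  by apply: (@segment_param_open _ y _); exists s; split => //; ring.
- move=> [s [t [hs [ht ->]]]] /=; split.
    by apply: (@segment_param_open _ x _); exists s; split => //; ring.
  by apply: (@segment_param_open _ y _); exists t; split => //; ring.
Qed.

Lemma pdist_sq_pt_negy a b x y : pdist (sq_pt a b x (~~ y)) (sq_pt a b x y) = d.
Proof.
rewrite -[RHS](ger0_norm (ltW d_gt0)) -sqrtr_sqr /pdist /pnorm /pdot /psub /sq_pt /=.
by congr Num.sqrt; case: y; rewrite /= ?b2r1 ?b2r0; ring.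
Qed.
Lemma pdist_sq_pt_negx a b x y : pdist (sq_pt a b (~~ x) y) (sq_pt a b x y) = d.
Proof.
rewrite -[RHS](ger0_norm (ltW d_gt0)) -sqrtr_sqr /pdist /pnorm /pdot /psub /sq_pt /=.
by congr Num.sqrt; case: x; rewrite /= ?b2r1 ?b2r0; ring.
Qed.

Lemma sq_pt_inj a1 b1 e1 e2 a2 b2 f1 f2 : sq_pt a1 b1 e1 e2 = sq_pt a2 b2 f1 f2 ->
  a1 + (e1 : nat)%:Z = a2 + (f1 : nat)%:Z /\ b1 + (e2 : nat)%:Z = b2 + (f2 : nat)%:Z.
Proof.
have d0 : d != 0 by rewrite gt_eqF.
case => /(mulfI d0) h1 /(mulfI d0) h2.
by split; apply: (@intr_inj R); rewrite !b2rz.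
Qed.

Lemma sq_pt_negy_neq_negx a b x y : sq_pt a b x (~~ y) <> sq_pt a b (~~ x) y.
Proof. by move/sq_pt_inj => [h _]; case: x h => /=; lia. Qed.
Lemma sq_pt_neq_opposite a b x y : sq_pt a b x y <> sq_pt a b (~~ x) (~~ y).
Proof. by move/sq_pt_inj => [h _]; case: x h => /=; lia. Qed.

Lemma rh_swap_sq a b x y c : rh_swap (sq_rhomb a b x y c) = sq_rhomb a b x y (~~ c).
Proof. by case: c. Qed.
Lemma rh_flip_sq a b x y c : rh_flip (sq_rhomb a b x y c) = sq_rhomb a b (~~ x) (~~ y) (~~ c).
Proof. by rewrite /rh_flip rh_u'_sq; case: c; rewrite /sq_rhomb !negbK. Qed.

Lemma evenz_negb (a b : int) (x y : bool) : evenz (a + b + (x : nat)%:Z + (y : nat)%:Z) ->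
  evenz (a + b + (~~ x : nat)%:Z + (~~ y : nat)%:Z).
Proof.
case: x; case: y => /= -[k hk]; [exists (k - 1) | exists k | exists k | exists (k + 1)]; lia.
Qed.

Lemma sq_pt_eq (a1 b1 : int) (e1 e2 : bool) (a2 b2 : int) (f1 f2 : bool) :
  a1 + (e1 : nat)%:Z = a2 + (f1 : nat)%:Z -> b1 + (e2 : nat)%:Z = b2 + (f2 : nat)%:Z ->
  sq_pt a1 b1 e1 e2 = sq_pt a2 b2 f1 f2.
Proof. by move=> h1 h2; rewrite /sq_pt -!b2rz h1 h2. Qed.

Lemma rh_verts_sq a b x y c v : rh_verts (sq_rhomb a b x y c) v <-> exists e1 e2, v = sq_pt a b e1 e2.
Proof.
rewrite /rh_verts rh_u'_sq; split.
  by case: c => /= -[[[->|->]|->]|->]; do 2 eexists.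
move=> [e1 [e2 ->]].
have [h1|h1] : e1 = x \/ e1 = ~~ x by case: e1; case: x; auto.
all: have [h2|h2] : e2 = y \/ e2 = ~~ y by case: e2; case: y; auto.
all: subst; case: c => /=; tauto.
Qed.

Lemma int_between (a1 a2 : int) (v : R) : d * a2%:~R <= d * v -> d * v <= d * (a2%:~R + 1) ->
  v = a1%:~R -> a2 <= a1 <= a2 + 1.
Proof.
have dp := d_gt0.
move=> h1 h2 e; rewrite e in h1 h2.
have h1' : (a2%:~R : R) <= a1%:~R by nra.
have h2' : (a1%:~R : R) <= (a2 + 1)%:~R by rewrite intrD mulr1z; nra.
by rewrite ler_int in h1'; rewrite ler_int in h2'; rewrite h1' h2'.
Qed.

Lemma sq_box_corner (a1 b1 : int) (e1 e2 : bool) (a2 b2 : int) :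
  sq_box a2 b2 (sq_pt a1 b1 e1 e2) -> exists f1 f2, sq_pt a1 b1 e1 e2 = sq_pt a2 b2 f1 f2.
Proof.
rewrite /sq_box /sq_pt /= => -[/andP[h1 h2] /andP[h3 h4]].
have /andP[k1 k2] := @int_between (a1 + (e1 : nat)%:Z) a2 _ h1 h2 (esym (b2rz a1 e1)).
have /andP[k3 k4] := @int_between (b1 + (e2 : nat)%:Z) b2 _ h3 h4 (esym (b2rz b1 e2)).
exists (a1 + (e1 : nat)%:Z == a2 + 1), (b1 + (e2 : nat)%:Z == b2 + 1).
apply: sq_pt_eq.
  by case: eqP => /= h; lia.
by case: eqP => /= h; lia.
Qed.

Lemma scaled_floor_itv (v : R) :
  d * (Num.floor (v / d))%:~R <= v <= d * ((Num.floor (v / d))%:~R + 1).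
Proof.
have dp := d_gt0; have d0 : d != 0 by rewrite gt_eqF.
have /andP[h1 h2] := floor_itv (v / d).
rewrite intrD mulr1z in h2.
have e : v / d * d = v by rewrite divfK.
by apply/andP; split; nra.
Qed.

Lemma evenz_addb (k : int) : exists x : bool, evenz (k + (x : nat)%:Z).
Proof.
have hm := divz_eq k 2.
have h0 : 0 <= (k %% 2)%Z by apply: modz_ge0.
have h1 : (k %% 2 < 2)%Z by apply: ltz_pmod.
have [e|ne] := eqVneq (k %% 2)%Z 1.
  by exists true; exists ((k %/ 2)%Z + 1) => /=; lia.
by exists false; exists (k %/ 2)%Z => /=; lia.
Qed.

Lemma open_cell_unique (a1 a2 : int) v :
  d * a1%:~R < v < d * (a1%:~R + 1) -> d * a2%:~R < v < d * (a2%:~R + 1) -> a1 = a2.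
Proof.
have dp := d_gt0; move=> /andP[i1 i2] /andP[j1 j2].
have k1 : (a1%:~R : R) < (a2 + 1)%:~R by rewrite intrD mulr1z; nra.
have k2 : (a2%:~R : R) < (a1 + 1)%:~R by rewrite intrD mulr1z; nra.
by rewrite ltr_int in k1; rewrite ltr_int in k2; lia.
Qed.

Lemma square_sides r : square_lattice r ->
  [/\ pdist (rh_w r) (rh_u r) = d, pdist (rh_w' r) (rh_u r) = d,
      rh_w r <> rh_w' r & rh_u r <> rh_u' r].
Proof.
move=> [a [b [x [y [c [_ ->]]]]]]; rewrite rh_u'_sq; split.
- by case: c; rewrite /sq_rhomb /rh_w /rh_u /=; [exact: pdist_sq_pt_negy | exact: pdist_sq_pt_negx].
- by case: c; rewrite /sq_rhomb /rh_w' /rh_u /=; [exact: pdist_sq_pt_negx | exact: pdist_sq_pt_negy].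
- case: c; rewrite /sq_rhomb /rh_w' /rh_w /=; first exact: sq_pt_negy_neq_negx.
  by move=> e; apply: (@sq_pt_negy_neq_negx a b x y); rewrite e.
- by case: c; exact: sq_pt_neq_opposite.
Qed.

Lemma square_swap_flip r : square_lattice r ->
  square_lattice (rh_swap r) /\ square_lattice (rh_flip r).
Proof.
move=> [a [b [x [y [c [ev ->]]]]]]; split.
  by exists a, b, x, y, (~~ c); split => //; exact: rh_swap_sq.
by exists a, b, (~~ x), (~~ y), (~~ c); split; [exact: evenz_negb | exact: rh_flip_sq].
Qed.

Lemma square_bicoloured : primal_v square_lattice `&` dual_v square_lattice = set0.
Proof.
apply/seteqP; split => // z [[r1 [[a1 [b1 [x1 [y1 [c1 [[k1 ev1] ->]]]]]] h1]]
                             [r2 [[a2 [b2 [x2 [y2 [c2 [[k2 ev2] ->]]]]]] h2]]].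
move: h1 h2; rewrite /sq_rhomb; case: c1; case: c2; rewrite /rh_u /rh_w /= => <- /sq_pt_inj [];
  case: x1 ev1; case: y1; case: x2 ev2; case: y2 => /= ev2 ev1; lia.
Qed.

Lemma square_cover z : exists r, square_lattice r /\ rh_hull r z.
Proof.
pose a := Num.floor (z.1 / d); pose b := Num.floor (z.2 / d).
have [x ev] := evenz_addb (a + b).
exists (sq_rhomb a b x false false); split.
  by exists a, b, x, false, false; split => //=; rewrite addr0.
by apply/rh_hull_sq; split; apply: scaled_floor_itv.
Qed.

Lemma square_overlap r1 r2 z : square_lattice r1 -> square_lattice r2 ->
  rh_int r1 z -> rh_int r2 z -> rh_hull r1 = rh_hull r2.
Proof.
move=> [a1 [b1 [x1 [y1 [c1 [_ ->]]]]]] [a2 [b2 [x2 [y2 [c2 [_ ->]]]]]].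
move=> /rh_int_sq [za1 zb1] /rh_int_sq [za2 zb2].
rewrite (open_cell_unique za1 za2) (open_cell_unique zb1 zb2).
by apply/funext => w; apply/propext; rewrite !rh_hull_sq.
Qed.

Lemma square_conform r1 r2 v : square_lattice r1 -> square_lattice r2 ->
  rh_verts r1 v -> rh_hull r2 v -> rh_verts r2 v.
Proof.
move=> [a1 [b1 [x1 [y1 [c1 [_ ->]]]]]] [a2 [b2 [x2 [y2 [c2 [_ ->]]]]]].
move=> /rh_verts_sq [e1 [e2 ->]] /rh_hull_sq /sq_box_corner [f1 [f2 ->]].
by apply/rh_verts_sq; exists f1, f2.
Qed.

Lemma isoradial_square : isoradial d square_lattice.
Proof.
split; [| exact: square_swap_flip | split; [exact: square_bicoloured | exact: square_cover]
       | exact: square_overlap | exact: square_conform].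
by move=> r /square_sides[].
Qed.

Lemma half_angle_sq a b x y c : half_angle (sq_rhomb a b x y c) = pi / 4.
Proof.
rewrite /half_angle.
have -> : pdot (psub (rh_w (sq_rhomb a b x y c)) (rh_u (sq_rhomb a b x y c)))
               (psub (rh_w' (sq_rhomb a b x y c)) (rh_u (sq_rhomb a b x y c))) = 0.
  by case: c; rewrite /pdot /psub /sq_rhomb /sq_pt /rh_w /rh_w' /rh_u /=; ring.
by rewrite mul0r acos0; field.
Qed.

Lemma angles_bounded_square eta : 0 < eta < pi / 4 -> angles_bounded eta square_lattice.
Proof.
move=> /andP[h1 h2] r [a [b [x [y [c [_ ->]]]]]]; rewrite half_angle_sq.
have hp := pi_gt0 R.
apply/andP; split; lra.
Qed.

Lemma unit_square_corner (s t : R) (par : bool) : 0 <= s <= 1 -> 0 <= t <= 1 ->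
  exists e1 e2 : bool, (e1 (+) e2) = par /\ (b2r e1 - s) ^+ 2 + (b2r e2 - t) ^+ 2 <= 1.
Proof.
move=> /andP[s0 s1] /andP[t0 t1]; case: par.
  have [h|h] := lerP t s.
    by exists true, false; split => //; rewrite b2r1 b2r0; nra.
  by exists false, true; split => //; rewrite b2r1 b2r0; nra.
have [h|h] := lerP (s + t) 1.
  by exists false, false; split => //; rewrite b2r0; nra.
by exists true, true; split => //; rewrite b2r1; nra.
Qed.

Lemma sq_pt_near (z : pt R) (par : bool) : exists (a b : int) (e1 e2 : bool),
  (exists x : bool, evenz (a + b + (x : nat)%:Z) /\ (e1 (+) e2) = (x (+) par)) /\ pdist (sq_pt a b e1 e2) z <= d.
Proof.
have dp := d_gt0; have d0 : d != 0 by rewrite gt_eqF.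
pose a := Num.floor (z.1 / d); pose b := Num.floor (z.2 / d).
have [x ev] := evenz_addb (a + b).
pose s := z.1 / d - a%:~R; pose t := z.2 / d - b%:~R.
have /andP[ha1 ha2] := floor_itv (z.1 / d).
have /andP[hb1 hb2] := floor_itv (z.2 / d).
rewrite intrD mulr1z in ha2; rewrite intrD mulr1z in hb2.
have hs : 0 <= s <= 1 by rewrite /s; apply/andP; split; lra.
have ht : 0 <= t <= 1 by rewrite /t; apply/andP; split; lra.
have [e1 [e2 [he hd]]] := @unit_square_corner s t (x (+) par) hs ht.
exists a, b, e1, e2; split; first by exists x.
have ez1 : z.1 = d * (a%:~R + s) by rewrite /s addrCA subrr addr0 mulrC divfK.
have ez2 : z.2 = d * (b%:~R + t) by rewrite /t addrCA subrr addr0 mulrC divfK.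
rewrite /pdist /pnorm /pdot /psub /sq_pt /= ez1 ez2.
rewrite -[X in _ <= X](ger0_norm (ltW dp)) -sqrtr_sqr ler_sqrt ?sqr_ge0 //.
have -> : (d * (a%:~R + b2r e1) - d * (a%:~R + s)) * (d * (a%:~R + b2r e1) - d * (a%:~R + s)) +
   (d * (b%:~R + b2r e2) - d * (b%:~R + t)) * (d * (b%:~R + b2r e2) - d * (b%:~R + t)) =
   d ^+ 2 * ((b2r e1 - s) ^+ 2 + (b2r e2 - t) ^+ 2) by ring.
by rewrite -[X in _ <= X]mulr1; apply: ler_wpM2l; rewrite ?sqr_ge0.
Qed.

Lemma dual_v_square_near (z : pt R) : exists w, dual_v square_lattice w /\ pdist w z <= d.
Proof.
have [a [b [e1 [e2 [[x [[k ev] hp]] hd]]]]] := sq_pt_near z true.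
exists (sq_pt a b e1 e2); split => //.
exists (sq_rhomb a b e1 (~~ e2) true); split; last by rewrite /sq_rhomb /rh_w /= negbK.
exists a, b, e1, (~~ e2), true; split => //.
clear hd; move: hp ev; case: x; case: e1; case: e2 => //= _ ev;
  first [exists k; lia | exists (k + 1); lia | exists (k - 1); lia].
Qed.

Lemma primal_v_square_near (z : pt R) : exists w, primal_v square_lattice w /\ pdist w z <= d.
Proof.
have [a [b [e1 [e2 [[x [[k ev] hp]] hd]]]]] := sq_pt_near z false.
exists (sq_pt a b e1 e2); split => //.
exists (sq_rhomb a b e1 e2 true); split => //.
exists a, b, e1, e2, true; split => //.
clear hd; move: hp ev; case: x; case: e1; case: e2 => //= _ ev;
  first [exists k; lia | exists (k + 1); lia | exists (k - 1); lia].
Qed.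

End SquareLattice.

Section ScalingLimit.
Variable R : realType.
Implicit Types (phi m : R) (L : set (rhomb R)).

(* [is_scaling_plus] and [is_scaling_free] are, up to conversion, the instances
   ([dual_v], [Eplus]) and ([primal_v], [Efree]). *)
Definition is_scaling (site : set (rhomb R) -> set (pt R))
    (E : R -> set (rhomb R) -> seq (pt R) -> R) m n (f : ('I_n -> pt R) -> R) :=
  forall eta, 0 < eta < pi / 4 ->
  forall Lam : R -> set (rhomb R),
    (forall delta, 0 < delta -> isoradial delta (Lam delta) /\ angles_bounded eta (Lam delta)) ->
  forall a : 'I_n -> pt R, injective a ->
  forall w : R -> 'I_n -> pt R,
    (forall delta i, 0 < delta -> site (Lam delta) (w delta i) /\ pdist (w delta i) (a i) <= delta) ->
  (fun delta => delta `^ (- (n%:R / 8)) * E (m * delta / 2) (Lam delta) [seq w delta i | i <- enum 'I_n])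
    @ 0^'+ --> Cconst R ^+ n * f a.

Lemma choice_near_sites site (Lam : R -> set (rhomb R)) n (a : 'I_n -> pt R) :
  (forall delta, 0 < delta -> forall z, exists w, site (Lam delta) w /\ pdist w z <= delta) ->
  exists w : R -> 'I_n -> pt R, forall delta i, 0 < delta ->
    site (Lam delta) (w delta i) /\ pdist (w delta i) (a i) <= delta.
Proof.
move=> site_near.
suff near_a delta : exists wd : 'I_n -> pt R, forall i, 0 < delta ->
    site (Lam delta) (wd i) /\ pdist (wd i) (a i) <= delta.
  by have [w ?] := boolp.choice near_a; exists w.
suff near_ai i : exists wi, 0 < delta -> site (Lam delta) wi /\ pdist wi (a i) <= delta.
  by have [wd ?] := boolp.choice near_ai; exists wd.
have [delta_gt0|_] := ltP 0 delta; last by exists (a i).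
by have [wi near_wi] := site_near delta delta_gt0 (a i); exists wi.
Qed.

Lemma is_scaling_rot site E m n (f : ('I_n -> pt R) -> R) :
  (forall phi L, site (lat_rot phi L) = prot (- phi) @^-1` site L) ->
  (forall q phi L xs, sym_closed L -> E q (lat_rot phi L) (map (prot phi) xs) = E q L xs) ->
  (forall delta, 0 < delta -> forall z, exists w, site (square_lattice delta) w /\ pdist w z <= delta) ->
  is_scaling site E m f ->
  forall phi (a : 'I_n -> pt R), injective a ->
    Cconst R ^+ n * f (fun i => prot phi (a i)) = Cconst R ^+ n * f a.
Proof.
move=> site_rot E_rot site_near scal phi a a_inj.
pose eta := pi / 8 : R.
have eta_bnd : 0 < eta < pi / 4 by rewrite /eta; have := pi_gt0 R; lra.
have Lam_ok delta : 0 < delta ->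
    isoradial delta (square_lattice delta) /\ angles_bounded eta (square_lattice delta).
  by move=> delta_gt0; split; [exact: isoradial_square | exact: angles_bounded_square].
have Lrot_ok delta : 0 < delta -> isoradial delta (lat_rot phi (square_lattice delta)) /\
    angles_bounded eta (lat_rot phi (square_lattice delta)).
  by move=> /Lam_ok[iso bnd]; split; [exact: isoradial_rot | exact: angles_bounded_rot].
have [w w_near] := choice_near_sites a site_near.
have wrot_near delta i : 0 < delta ->
    site (lat_rot phi (square_lattice delta)) (prot phi (w delta i)) /\
    pdist (prot phi (w delta i)) (prot phi (a i)) <= delta.
  by move=> /(w_near _ i)[site_w dist_w]; rewrite site_rot /preimage /= protK pdist_prot.
have rot_inj : injective (fun i => prot phi (a i)) by move=> i j /prot_inj/a_inj.
have lim_a := scal eta eta_bnd _ Lam_ok a a_inj w w_near.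
have lim_rot := scal eta eta_bnd _ Lrot_ok _ rot_inj _ wrot_near.
apply: (cvg_unique _ (cvg_trans (near_eq_cvg _) lim_rot) lim_a); first exact: norm_hausdorff.
apply: (filterS _ (nbhs_right_gt 0)) => delta /= delta_gt0.
rewrite (map_comp (prot phi) (w delta)) E_rot //.
exact: isoradial_sym_closed (isoradial_square delta_gt0).
Qed.

End ScalingLimit.

Theorem corollary1p2 (R : realType) (n : nat) (m : R)
  (fplus ffree : ('I_n -> pt R) -> R) :
  (2 <= n)%N -> m < 0 ->
  is_scaling_plus m fplus -> is_scaling_free (- m) ffree ->
  forall (phi : R) (a : 'I_n -> pt R), injective a ->
    Cconst R ^+ n * fplus (fun i => prot phi (a i)) = Cconst R ^+ n * fplus a /\
    Cconst R ^+ n * ffree (fun i => prot phi (a i)) = Cconst R ^+ n * ffree a.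
Proof.
move=> _ _ scal_plus scal_free phi a a_inj; split.
- apply: (is_scaling_rot (@dual_v_rot R) (@Eplus_rot R) _ scal_plus) => // delta delta_gt0.
  exact: dual_v_square_near.
- apply: (is_scaling_rot (@primal_v_rot R) (@Efree_rot R) _ scal_free) => // delta delta_gt0.
  exact: primal_v_square_near.
Qed.
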